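(* Let $M\ge 2$ and $d\ge 2$ be integers and put $m=M^{d-1}$. Consider all integer sequences of dilations $1=s_1\le s_2\le\cdots\le s_d=m$ such that $s_i=n_i s_{i-1}$ for some positive integer $n_i$, for each $i=2,\dots,d$ (i.e. each dilation divides the next). For each such sequence, let $\bar{\mathcal d}(s_1,\dots,s_d)$ be the mean recurrent length, with period $m$, of the $d$-layer dilated RNN graph with dilations $s_1,\dots,s_d$. Then among all such sequences, $\bar{\mathcal d}$ is minimized by the sequence $s_i=M^{i-1}$, $i=1,\dots,d$.
   Context: Dilated RNN graph with dilations $s_1,\dots,s_d$ (positive integers): the directed graph with vertex set $\{x_t: t\in\mathbb Z\}\cup\{c^{(l)}_t: t\in\mathbb Z,\ 1\le l\le d\}$ and edges $x_t\to c^{(1)}_t$, $c^{(l)}_t\to c^{(l+1)}_t$ for $1\le l<d$, and $c^{(l)}_t\to c^{(l)}_{t+s_l}$ for $1\le l\le d$ (these are all the edges; in particular there is no edge $c^{(l)}_t\to c^{(l)}_{t+1}$ unless $s_l=1$). The node $x_t$ is the input at time $t$ and $c^{(d)}_t$ is the output at time $t$. For $i\in\mathbb Z$ and $n\ge1$, $\mathcal d_i(n)$ denotes the number of edges of a shortest directed path from $x_i$ to $c^{(d)}_{i+n}$. The mean recurrent length with period $m$ is $\bar{\mathcal d}=\frac1m\sum_{n=1}^{m}\max_{i\in\mathbb Z}\mathcal d_i(n)$. *)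

From HB Require Import structures.
From mathcomp Require Import all_boot all_order all_algebra.
Set Implicit Arguments. Unset Strict Implicit. Unset Printing Implicit Defensive.
Import Order.TTheory GRing.Theory Num.Theory.

(* Vertices of the dilated RNN graph: x_t and c^(l)_t (t : int). *)
Inductive vtx : Type :=
| X : int -> vtx
| C : nat -> int -> vtx.

Inductive edge (d : nat) (s : nat -> nat) : vtx -> vtx -> Prop :=
| edge_in : forall t : int, edge d s (X t) (C 1 t)
| edge_up : forall (l : nat) (t : int), 1 <= l -> l < d ->
    edge d s (C l t) (C l.+1 t)
| edge_rec : forall (l : nat) (t : int), 1 <= l -> l <= d ->
    edge d s (C l t) (C l (t + (s l)%:Z)%R).

Inductive walk (d : nat) (s : nat -> nat) : vtx -> vtx -> nat -> Prop :=
| walk_nil : forall v, walk d s v v 0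
| walk_cons : forall u w v k, edge d s u w -> walk d s w v k ->
    walk d s u v k.+1.

Definition shortest_len (d : nat) (s : nat -> nat) (i : int) (n : nat) (k : nat) : Prop :=
  walk d s (X i) (C d (i + n%:Z)%R) k /\
  forall k', walk d s (X i) (C d (i + n%:Z)%R) k' -> k <= k'.

Definition max_dist (d : nat) (s : nat -> nat) (n : nat) (D : nat) : Prop :=
  (forall i : int, exists k, shortest_len d s i n k /\ k <= D) /\
  (exists i : int, shortest_len d s i n D).

Definition mean_len (m : nat) (D : nat -> nat) : rat :=
  ((\sum_(1 <= n < m.+1) D n)%:R / m%:R)%R.

Definition admissible (d m : nat) (s : nat -> nat) : Prop :=
  s 1 = 1 /\ s d = m /\
  (forall i, 2 <= i <= d -> s i.-1 <= s i /\ exists ni, 0 < ni /\ s i = ni * s i.-1).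

From mathcomp Require Import all_boot all_order all_algebra.
From mathcomp Require Import zify.
Import Order.TTheory GRing.Theory Num.Theory.

Set Implicit Arguments.
Unset Strict Implicit.
Unset Printing Implicit Defensive.

(* Put r_l = s_(l+1) / s_l.  A shortest path from x_i to c^(d)_(i+n) enters
   layer 1 and climbs the layers one by one, walking along layer l with stride
   s_l; its length is d plus the digit sum of n in the mixed radix
   (r_1, ..., r_(d-1)), whatever i is.  Summing digit sums over a period gives
   2 (d(1) + ... + d(m)) = 2 m d + m ((r_1 - 1) + ... + (r_(d-1) - 1)) + 2,
   and as r_1 ... r_(d-1) = m = M^(d-1), AM-GM bounds the sum of the r_l below
   by (d - 1) M, which is attained by r_l = M. *)

(* Digits of q in the mixed radix rs, least significant first; the last digit,
   q divided by the product of rs, is unbounded. *)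
Fixpoint digit_sum (rs : seq nat) (q : nat) : nat :=
  if rs is r :: rs' then q %% r + digit_sum rs' (q %/ r) else q.

Lemma digit_sum0 rs : digit_sum rs 0 = 0.
Proof. by elim: rs => //= r rs IH; rewrite mod0n div0n IH. Qed.

Section DigitSum.
Variable rs : seq nat.
Hypothesis rs_gt0 : all (fun r => 0 < r) rs.

Lemma digit_sumS q : digit_sum rs q.+1 <= (digit_sum rs q).+1.
Proof.
elim: rs rs_gt0 q => [|r rs' IH] //= /andP[r_gt0 rs'_gt0] q.
rewrite modnS divnS //; case: (r %| q.+1) => /=.
  by rewrite add0n (leq_trans (IH rs'_gt0 _)) // -addnS leq_addl.
by rewrite add0n addSn.
Qed.

Lemma digit_sum_prod : digit_sum rs (\prod_(r <- rs) r) = 1.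
Proof.
elim: rs rs_gt0 => [|r rs' IH]; first by rewrite big_nil.
by case/andP=> r_gt0 /IH; rewrite big_cons /= modnMr mulKn.
Qed.

Lemma sum_digit_sum :
  2 * \sum_(0 <= q < \prod_(r <- rs) r) digit_sum rs q =
  \prod_(r <- rs) r * \sum_(r <- rs) r.-1.
Proof.
elim: rs rs_gt0 => [|r rs' IH] /=; first by rewrite !big_nil big_nat1.
case/andP=> r_gt0 /IH{}IH; rewrite !big_cons.
have sum_block a :
    \sum_(a * r <= q < a.+1 * r) (q %% r + digit_sum rs' (q %/ r)) =
    \sum_(0 <= i < r) i + r * digit_sum rs' a.
  rewrite -{1}[a * r]add0n big_addn mulSn addnK big_split /=.
  congr (_ + _).
    by apply: eq_big_nat => i /andP[_ lt_ir]; rewrite addnC modnMDl modn_small.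
  rewrite -[r in RHS]subn0 -sum_nat_const_nat.
  apply: eq_big_nat => i /andP[_ lt_ir].
  by rewrite addnC divnMDl // divn_small ?addn0.
have double_sum_iota : 2 * \sum_(0 <= i < r) i = r * r.-1.
  by rewrite bin2_sum mulnC -[2]/(2`!) bin_ffact ffactnS ffactn1.
rewrite [X in \sum_(0 <= q < X) _]mulnC big_nat_mul.
rewrite (eq_bigr _ (fun a _ => sum_block a)) big_split /=.
rewrite sum_nat_const_nat -big_distrr /= subn0 mulnDr mulnCA double_sum_iota.
rewrite [2 * (r * _)]mulnCA IH; nia.
Qed.

Lemma sum_digit_sum1 :
  2 * \sum_(1 <= q < (\prod_(r <- rs) r).+1) digit_sum rs q =
  \prod_(r <- rs) r * \sum_(r <- rs) r.-1 + 2.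
Proof.
have := @big_ltn _ 0 addn _ _ (digit_sum rs) (ltn0Sn (\prod_(r <- rs) r)).
rewrite big_nat_recr //= digit_sum0 digit_sum_prod add0n => <-.
by rewrite mulnDr sum_digit_sum.
Qed.
End DigitSum.

Lemma AGM_nat (rs : seq nat) M :
  \prod_(r <- rs) r = M ^ size rs -> size rs * M <= \sum_(r <- rs) r.
Proof.
have [-> // | k_gt0] := posnP (size rs).
rewrite (big_nth 0) [X in _ <= X](big_nth 0) !big_mkord => prod_rs.
have [AGM _] := leif_AGM_scaled (R := int) (A := predT)
  (E := fun i : 'I_(size rs) => (nth 0 rs i)%:R%R)
  (fun i _ => mulrn_wge0 _ (ler0n _ _)).
move: AGM; rewrite card_ord.
under eq_bigr do rewrite -mulrnA.
rewrite -natr_prod -natr_sum -natrX ler_nat.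
by rewrite big_split prod_nat_const card_ord /= prod_rs -expnMn leq_exp2r // mulnC.
Qed.

Lemma walk_cat d s u w v k1 k2 :
  walk d s u w k1 -> walk d s w v k2 -> walk d s u v (k1 + k2).
Proof. by elim=> // u0 w0 v0 k e _ IH /IH; apply: walk_cons. Qed.

Lemma walk_rec_iter d s l t n : 1 <= l <= d ->
  walk d s (C l t) (C l (t + (n * s l)%:Z)%R) n.
Proof.
case/andP=> l_gt0 le_ld; elim: n t => [|n IH] t.
  by rewrite addr0; apply: walk_nil.
apply: walk_cons (edge_rec _ _ l_gt0 le_ld) _.
by rewrite mulSn PoszD addrA; apply: IH.
Qed.

Section DilatedGraph.
Variables (d : nat) (s : nat -> nat).
Hypothesis s_gt0 : forall l, 1 <= l <= d -> 0 < s l.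
Hypothesis s_dvd : forall l, 1 <= l < d -> s l %| s l.+1.

Definition ratios l := [seq s j.+1 %/ s j | j <- index_iota l d].

Lemma ratio_gt0 l : 1 <= l < d -> 0 < s l.+1 %/ s l.
Proof.
move=> /andP[l_gt0 lt_ld].
have sl_gt0 : 0 < s l by apply: s_gt0; rewrite l_gt0 ltnW.
have sl1_gt0 : 0 < s l.+1 by apply: s_gt0.
by rewrite divn_gt0 // dvdn_leq // s_dvd // l_gt0.
Qed.

Lemma ratios_gt0 l : 1 <= l -> all (fun r => 0 < r) (ratios l).
Proof.
move=> l_gt0; apply/allP => _ /mapP[j + ->].
rewrite mem_index_iota => /andP[le_lj lt_jd].
by rewrite ratio_gt0 // lt_jd andbT (leq_trans l_gt0 le_lj).
Qed.

Lemma ratios_cons l : l < d ->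
  ratios l = s l.+1 %/ s l :: ratios l.+1.
Proof. by move=> lt_ld; rewrite /ratios /index_iota -(subnSK lt_ld). Qed.

Lemma ratios_top : ratios d = [::].
Proof. by rewrite /ratios /index_iota subnn. Qed.

Lemma prod_ratios l : 1 <= l <= d -> \prod_(r <- ratios l) r * s l = s d.
Proof.
move def_k : (d - l) => k; elim: k l def_k => [|k IH] l def_k /andP[l_gt0 le_ld].
  suff -> : l = d by rewrite ratios_top big_nil mul1n.
  lia.
rewrite ratios_cons ?big_cons; last by lia.
rewrite -mulnA mulnCA divnK ?s_dvd ?IH //; lia.
Qed.

Lemma walk_to_top l t q : 1 <= l <= d ->
  walk d s (C l t) (C d (t + (q * s l)%:Z)%R) (d - l + digit_sum (ratios l) q).
Proof.
move def_k : (d - l) => k.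
elim: k l t q def_k => [|k IH] l t q def_k /andP[l_gt0 le_ld].
  have eq_ld : l = d by lia.
  by rewrite eq_ld ratios_top add0n; apply: walk_rec_iter; lia.
have lt_ld : l < d by lia.
have l_range : 0 < l < d by rewrite l_gt0.
rewrite ratios_cons //=; set r := s l.+1 %/ s l.
have -> : (t + (q * s l)%:Z = t + (q %% r * s l)%:Z + (q %/ r * s l.+1)%:Z)%R.
  rewrite -addrA -PoszD -(divnK (s_dvd l_range)) -/r.
  by rewrite mulnA -mulnDl addnC -divn_eq.
rewrite addnCA addSn; apply: walk_cat; first by apply: walk_rec_iter; lia.
apply: walk_cons (edge_up _ _ l_gt0 lt_ld) _; apply: IH; lia.
Qed.

(* A recurrent edge raises the digit sum by at most one, an upward edge keeps
   it: no walk beats the one of [walk_to_top]. *)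
Lemma walk_to_top_ge u v w : walk d s u v w ->
  forall l t t', u = C l t -> v = C d t' -> 1 <= l <= d ->
  exists2 q, t' = (t + (q * s l)%:Z)%R & d - l + digit_sum (ratios l) q <= w.
Proof.
elim=> [v0 | u0 w0 v0 k e _ IH] l t t' Eu Ev l_range.
  move: Ev; rewrite Eu => -[-> ->].
  by exists 0; rewrite ?addr0 // subnn digit_sum0.
case: e Eu IH => [t0 | l0 t0 _ lt_ld | l0 t0 _ _] // [El Et] IH; subst l0 t0.
- have l_lt : 0 < l < d by lia.
  have l1_range : 1 <= l.+1 <= d by lia.
  have [q -> le_qk] := IH _ _ _ erefl Ev l1_range.
  exists (q * (s l.+1 %/ s l)); first by rewrite -mulnA divnK // s_dvd.
  rewrite ratios_cons //= modnMl mulnK ?ratio_gt0 // add0n; lia.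
- have [q -> le_qk] := IH _ _ _ erefl Ev l_range.
  exists q.+1; first by rewrite mulSn PoszD addrA.
  have /andP[l_gt0 _] := l_range.
  have := digit_sumS (ratios_gt0 l_gt0) q; lia.
Qed.

Hypothesis s1 : s 1 = 1.
Hypothesis d_gt0 : 0 < d.

Definition recurrent_length n := d + digit_sum (ratios 1) n.

Lemma walk_input_output i n :
  walk d s (X i) (C d (i + n%:Z)%R) (recurrent_length n).
Proof.
rewrite /recurrent_length -[d in d + _](subnKC d_gt0) add1n addSn.
apply: walk_cons (edge_in _ _ _) _.
by have := @walk_to_top 1 i n; rewrite s1 muln1 d_gt0; apply.
Qed.

Lemma walk_input_output_ge i n w :
  walk d s (X i) (C d (i + n%:Z)%R) w -> recurrent_length n <= w.
Proof.
move Eu : (X i) => u; move Ev : (C d _) => v W.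
case: W Eu Ev => [v0 <- // | u0 w0 v0 k e W Eu Ev].
case: e Eu W => // _ [<-] W.
have [q /addrI []] := walk_to_top_ge W erefl (esym Ev) d_gt0.
rewrite s1 muln1 /recurrent_length => -> le_qk.
by rewrite -[d in d + _](subnKC d_gt0).
Qed.

Lemma shortest_len_recurrent_length i n :
  shortest_len d s i n (recurrent_length n).
Proof. by split; [apply: walk_input_output | apply: walk_input_output_ge]. Qed.

Lemma max_dist_recurrent_length n : max_dist d s n (recurrent_length n).
Proof.
split; last by exists 0%R; apply: shortest_len_recurrent_length.
move=> i; exists (recurrent_length n); split => //.
exact: shortest_len_recurrent_length.
Qed.

Lemma max_dist_eq n D : max_dist d s n D -> D = recurrent_length n.
Proof.
case=> _ [i [walk_D D_min]]; apply/eqP.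
rewrite eqn_leq (walk_input_output_ge walk_D) andbT.
exact: D_min (walk_input_output i n).
Qed.

Lemma sum_max_dist (D : nat -> nat) :
  (forall n, 1 <= n <= s d -> max_dist d s n (D n)) ->
  2 * \sum_(1 <= n < (s d).+1) D n =
  2 * (s d * d) + s d * \sum_(r <- ratios 1) r.-1 + 2.
Proof.
move=> max_dist_D.
have D_eq n : 1 <= n < (s d).+1 -> D n = recurrent_length n.
  by move=> n_range; apply: max_dist_eq; apply: max_dist_D.
rewrite (eq_big_nat _ _ D_eq) big_split sum_nat_const_nat /= subSS subn0.
rewrite mulnDr -addnA.
have := prod_ratios (l := 1) d_gt0; rewrite s1 muln1 => <-.
by rewrite sum_digit_sum1 // ratios_gt0.
Qed.

Lemma sum_ratios_ge M : 0 < M -> s d = M ^ d.-1 ->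
  d.-1 * M.-1 <= \sum_(r <- ratios 1) r.-1.
Proof.
move=> M_gt0 sd_eq.
have size_ratios : size (ratios 1) = d.-1 by rewrite size_map size_iota subn1.
have sum_pred : \sum_(r <- ratios 1) r.-1 + d.-1 = \sum_(r <- ratios 1) r.
  rewrite -size_ratios -sum1_size -big_split /=; apply: eq_big_seq => r.
  by move=> /(allP (ratios_gt0 (leqnn 1))) r_gt0; rewrite addn1 prednK.
have prod_eq : \prod_(r <- ratios 1) r = M ^ size (ratios 1).
  by rewrite size_ratios -sd_eq -(prod_ratios (l := 1) d_gt0) s1 muln1.
rewrite -(leq_add2r d.-1) sum_pred -mulnSr prednK // -size_ratios.
exact: AGM_nat prod_eq.
Qed.
End DilatedGraph.

Lemma admissible_gt0 d m s : admissible d m s -> forall l, 1 <= l <= d -> 0 < s l.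
Proof.
case=> s1 [_ s_step]; elim=> [|[_ _|l IH /andP[_ le_ld]]]; rewrite ?s1 //.
have /s_step[_ [n [n_gt0 ->]]] : 1 < l.+2 <= d := le_ld.
by rewrite muln_gt0 n_gt0 IH // (ltnW le_ld).
Qed.

Lemma admissible_dvd d m s :
  admissible d m s -> forall l, 1 <= l < d -> s l %| s l.+1.
Proof.
case=> _ [_ s_step] l l_range.
by have /s_step[_ [n [_ ->]]] : 1 < l.+1 <= d := l_range; apply: dvdn_mull.
Qed.

Lemma admissible_expn d M : 0 < M -> admissible d (M ^ d.-1) (fun i => M ^ i.-1).
Proof.
move=> M_gt0; do 2!split=> //; case=> [|[|i]] //= _.
by split; [rewrite leq_pexp2l | exists M; rewrite expnS].
Qed.

Lemma sum_ratios_expn d M : 0 < M ->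
  \sum_(r <- ratios d (fun i => M ^ i.-1) 1) r.-1 = d.-1 * M.-1.
Proof.
move=> M_gt0; rewrite big_map -subn1 -sum_nat_const_nat.
by apply: eq_big_nat => -[|j] //= _; rewrite expnS mulnK // expn_gt0 M_gt0.
Qed.

Section Admissible.
Variables (d m : nat) (s : nat -> nat).
Hypotheses (d_gt0 : 0 < d) (s_adm : admissible d m s).
Let s_gt0 := admissible_gt0 s_adm.
Let s_dvd := admissible_dvd s_adm.
Let s1 : s 1 = 1 := proj1 s_adm.

Lemma admissible_max_dist n : max_dist d s n (recurrent_length d s n).
Proof. exact: (max_dist_recurrent_length s_gt0 s_dvd s1 d_gt0). Qed.

Lemma admissible_sum_max_dist (D : nat -> nat) :
  (forall n, 1 <= n <= m -> max_dist d s n (D n)) ->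
  2 * \sum_(1 <= n < m.+1) D n = 2 * (m * d) + m * \sum_(r <- ratios d s 1) r.-1 + 2.
Proof.
case: s_adm => _ [<- _]; exact: (sum_max_dist s_gt0 s_dvd s1 d_gt0).
Qed.

Lemma admissible_sum_ratios_ge M : 0 < M -> m = M ^ d.-1 ->
  d.-1 * M.-1 <= \sum_(r <- ratios d s 1) r.-1.
Proof.
case: s_adm => _ [sd _] M_gt0 m_eq; rewrite m_eq in sd.
exact: (sum_ratios_ge s_gt0 s_dvd s1 d_gt0 M_gt0 sd).
Qed.
End Admissible.

Theorem theorem1 (M d : nat) (hM : 2 <= M) (hd : 2 <= d) :
  let m := M ^ d.-1 in
  let sstar := fun i : nat => M ^ i.-1 in
  admissible d m sstar /\
  (forall s, admissible d m s ->
     exists D : nat -> nat, forall n, 1 <= n <= m -> max_dist d s n (D n)) /\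
  (forall s (D Dstar : nat -> nat), admissible d m s ->
     (forall n, 1 <= n <= m -> max_dist d s n (D n)) ->
     (forall n, 1 <= n <= m -> max_dist d sstar n (Dstar n)) ->
     (mean_len m Dstar <= mean_len m D)%R).
Proof.
move=> m sstar.
have M_gt0 : 0 < M by apply: ltnW.
have d_gt0 : 0 < d by apply: ltnW.
have sstar_adm : admissible d m sstar := admissible_expn d M_gt0.
split=> //; split=> [s s_adm | s D Dstar s_adm max_dist_D max_dist_Dstar].
  exists (recurrent_length d s) => n _.
  exact: admissible_max_dist d_gt0 s_adm n.
rewrite /mean_len ler_wpM2r ?invr_ge0 // ler_nat -(leq_pmul2l (isT : 0 < 2)).
rewrite (admissible_sum_max_dist d_gt0 s_adm max_dist_D).
rewrite (admissible_sum_max_dist d_gt0 sstar_adm max_dist_Dstar) sum_ratios_expn //.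
rewrite leq_add2r leq_add2l leq_mul2l.
by rewrite (admissible_sum_ratios_ge d_gt0 s_adm M_gt0) ?orbT.
Qed.
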